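(* Let $N\ge 1$ be an integer, $\delta>0$, $\mu>0$, let $\underline{x}\le\overline{x}$ and $x_0$ be real numbers, and let $\underline{u},\overline{u}\in\mathbb{R}^N$ (indexed $k=0,\dots,N-1$). Define real numbers $\max\mathcal{F}_k,\min\mathcal{F}_k$ for $k=0,\dots,N$ by $\max\mathcal{F}_0=\min\mathcal{F}_0=x_0$ and, for $k=0,\dots,N-1$, $$\max\mathcal{F}_{k+1}=\min\{\overline{x},\ \max\mathcal{F}_k-\delta\underline{u}_k\},\qquad \min\mathcal{F}_{k+1}=\max\{\underline{x},\ \min\mathcal{F}_k-\delta\overline{u}_k\},$$ and let $\mathcal{F}_k=[\min\mathcal{F}_k,\max\mathcal{F}_k]$. Assume the problem is feasible in the sense that $\underline{u}_k\le\overline{u}_k$ for all $k=0,\dots,N-1$ and $\max\mathcal{F}_k\ge\min\mathcal{F}_k$ for all $k=1,\dots,N$. Define $\max\mathcal{G}_N=\max\mathcal{F}_N$, $\min\mathcal{G}_N=\min\mathcal{F}_N$, $x^{(0)}_N=\tfrac12(\max\mathcal{G}_N+\min\mathcal{G}_N)$, and for $k=N-1,\dots,0$: $$\max\mathcal{G}_k=\min\{\max\mathcal{G}_{k+1}+\delta\overline{u}_k,\ \max\mathcal{F}_k\},\qquad \min\mathcal{G}_k=\max\{\min\mathcal{G}_{k+1}+\delta\underline{u}_k,\ \min\mathcal{F}_k\},$$ $$x^{(0)}_k=\tfrac12(\max\mathcal{G}_k+\min\mathcal{G}_k),\qquad u^{(0)}_k=\tfrac1\delta\big(x^{(0)}_k-x^{(0)}_{k+1}\big).$$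 Let $\Phi\in\mathbb{R}^N$ be the vector of all ones, let $\Psi\in\mathbb{R}^{N\times N}$ be the lower triangular matrix with $\Psi_{ij}=\delta$ for $j\le i$ and $\Psi_{ij}=0$ for $j>i$, and set $$A=\begin{bmatrix}\Psi\\-\Psi\end{bmatrix}\in\mathbb{R}^{2N\times N},\qquad b=\begin{bmatrix}\Phi(x_0-\overline{x})\\-\Phi(x_0-\underline{x})\end{bmatrix}\in\mathbb{R}^{2N}.$$ Let $u^{(0)}=(u^{(0)}_0,\dots,u^{(0)}_{N-1})$, $s^{(0)}=Au^{(0)}-b$, $S^{(0)}=\mathrm{diag}(s^{(0)})$, and $\theta_1^{(0)}=\frac1\mu (S^{(0)})^{-1}\mathbf{1}$ (when defined). Then $(u^{(0)},s^{(0)},\theta_1^{(0)})$ satisfy all of the conditions $$S^{(0)}\theta_1^{(0)}=\tfrac1\mu\mathbf{1},\quad Au^{(0)}-b-s^{(0)}=0,\quad u^{(0)}-\underline{u}\ge0,\quad \overline{u}-u^{(0)}\ge0,\quad s^{(0)}>0,\quad \theta_1^{(0)}\ge0$$ if and only if $\max\mathcal{F}_k>\underline{x}$ and $\min\mathcal{F}_k<\overline{x}$ for all $k\in\{1,\dots,N\}$.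
   Context: This concerns initialization of an interior point method for the problem $\min_u F(u)$ subject to $x=\Phi x_0-\Psi u$, $\underline{x}\le x_k\le\overline{x}$ for $k=1,\dots,N$, and $\underline{u}\le u\le\overline{u}$, rewritten with slack variable $s\in\mathbb{R}^{2N}$ as $Au-b-s=0$, $s\ge0$; note $Au-b=(\overline{x}\Phi-x,\ x-\underline{x}\Phi)$. The intervals $\mathcal{F}_k$ are the sets of reachable feasible states at step $k$, the sets $\mathcal{G}_k$ form a backward-refined tube, and $\mathcal{X}=[\underline{x},\overline{x}]$. Vector inequalities are componentwise and $\mathbf{1}$ is the all-ones vector of length $2N$. *)

From HB Require Import structures.
From mathcomp Require Import all_boot all_order all_algebra.
Set Implicit Arguments. Unset Strict Implicit. Unset Printing Implicit Defensive.
Import Order.TTheory GRing.Theory Num.Theory.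
Local Open Scope ring_scope.

Section IPMInit.
Variable R : realFieldType.
Variable N : nat.
Variables (delta xlo xhi x0 : R).
Variables (ulo uhi : 'cV[R]_N).

(* k-th entry (k : nat, 0-based) of a length-N column vector; 0 if k >= N
   (never used out of range below). *)
Definition vget (v : 'cV[R]_N) (k : nat) : R :=
  if (insub k : option 'I_N) is Some i then v i 0 else 0.

Fixpoint maxF (k : nat) : R :=
  match k with
  | 0 => x0
  | k'.+1 => Num.min xhi (maxF k' - delta * vget ulo k')
  end.
Fixpoint minF (k : nat) : R :=
  match k with
  | 0 => x0
  | k'.+1 => Num.max xlo (minF k' - delta * vget uhi k')
  end.

(* backward recursion, indexed by m = N - k *)
Fixpoint maxGrev (m : nat) : R :=
  match m with
  | 0 => maxF N
  | m'.+1 => Num.min (maxGrev m' + delta * vget uhi (N - m'.+1)) (maxF (N - m'.+1))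
  end.
Fixpoint minGrev (m : nat) : R :=
  match m with
  | 0 => minF N
  | m'.+1 => Num.max (minGrev m' + delta * vget ulo (N - m'.+1)) (minF (N - m'.+1))
  end.
Definition maxG (k : nat) : R := maxGrev (N - k).
Definition minG (k : nat) : R := minGrev (N - k).

Definition xinit (k : nat) : R := (maxG k + minG k) / 2.
Definition uinit_k (k : nat) : R := (xinit k - xinit k.+1) / delta.

Definition u0 : 'cV[R]_N := \col_(i < N) uinit_k i.

Definition Phi : 'cV[R]_N := const_mx 1.
Definition Psi : 'M[R]_N := \matrix_(i < N, j < N) (if (j <= i)%N then delta else 0).
Definition Amat : 'M[R]_(N + N, N) := col_mx Psi (- Psi).
Definition bvec : 'cV[R]_(N + N) :=
  col_mx ((x0 - xhi) *: Phi) (- ((x0 - xlo) *: Phi)).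

Definition s0 : 'cV[R]_(N + N) := Amat *m u0 - bvec.
Definition S0 : 'M[R]_(N + N) := diag_mx (s0^T).
Definition theta0 (mu : R) : 'cV[R]_(N + N) :=
  mu^-1 *: (invmx S0 *m const_mx 1).

End IPMInit.

From HB Require Import structures.
From mathcomp Require Import all_boot all_order all_algebra.
From mathcomp Require Import lra.
Import Order.TTheory GRing.Theory Num.Theory.
Local Open Scope ring_scope.

(* The backward tube satisfies minF_k <= minG_k <= maxG_k <= maxF_k, and both
   maxG and minG drop by an amount in [delta ulo_k, delta uhi_k] from k to k+1.
   Hence the midpoints x_k start at x_0 and u^(0) respects its bounds; Psi u^(0)
   telescopes to x_0 - x_{k+1}, so s^(0) lists xhi - x_k and x_k - xlo for
   k = 1..N, and every condition reduces to xlo < x_k < xhi.  The tube gives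
   reachability from this at once.  Conversely, a backward induction shows that
   minF_k < maxG_k or maxG_k = maxF_k (and symmetrically for minG), which together
   with xlo < maxF_k and minF_k < xhi puts the midpoint strictly inside. *)

Lemma leq_down_ind (n : nat) (P : nat -> Prop) :
  P n -> (forall k, (k < n)%N -> P k.+1 -> P k) -> forall k, (k <= n)%N -> P k.
Proof.
move=> Pn IH k le_kn; rewrite -(subKn le_kn).
elim: (n - k)%N (leq_subr k n) => [|m IHm] le_mn; first by rewrite subn0.
apply: IH; first by rewrite ltn_subrL (leq_trans _ le_mn).
by rewrite subnSK //; apply: IHm; apply: ltnW.
Qed.

Lemma diag_mx_unitmx (R : fieldType) (n : nat) (d : 'rV[R]_n) :
  (forall i, d 0 i != 0) -> diag_mx d \in unitmx.
Proof. by move=> d_neq0; rewrite unitmxE det_diag unitfE; apply/prodf_neq0. Qed.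

Lemma Psi_mul_col_diff {R : realFieldType} {N : nat} (delta : R) (f : nat -> R)
    (i : 'I_N) : delta != 0 ->
  (Psi N delta *m \col_(j < N) ((f j - f j.+1) / delta)) i 0 = f 0%N - f i.+1.
Proof.
move=> delta_neq0; rewrite mxE.
under eq_bigr => j _ do rewrite !mxE (fun_if (fun a => a * _)) mul0r mulrC divfK //.
rewrite -big_mkcond /= -(big_ord_widen _ (fun j => f j - f j.+1) (ltn_ord i)).
rewrite -(big_mkord xpredT (fun j => f j - f j.+1)).
under eq_bigr do rewrite -opprB.
by rewrite sumrN telescope_sumr // opprB.
Qed.

Section InitialPoint.
Context {R : realFieldType} {N : nat} {delta xlo xhi x0 : R} {ulo uhi : 'cV[R]_N}.
Hypothesis delta_gt0 : 0 < delta.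
Hypothesis ulo_le_uhi : forall i : 'I_N, ulo i 0 <= uhi i 0.
Hypothesis feasible :
  forall k, (1 <= k <= N)%N -> minF delta xlo x0 uhi k <= maxF delta xhi x0 ulo k.

Local Notation Fmax := (maxF delta xhi x0 ulo).
Local Notation Fmin := (minF delta xlo x0 uhi).
Local Notation Gmax := (maxG delta xhi x0 ulo uhi).
Local Notation Gmin := (minG delta xlo x0 ulo uhi).
Local Notation xi := (xinit delta xlo xhi x0 ulo uhi).
Local Notation uinit := (u0 delta xlo xhi x0 ulo uhi).
Local Notation sinit := (s0 delta xlo xhi x0 ulo uhi).
Local Notation dlo k := (delta * vget ulo k).
Local Notation dhi k := (delta * vget uhi k).

Lemma vget_ord (v : 'cV[R]_N) (i : 'I_N) : vget v i = v i 0.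
Proof. by rewrite /vget valK. Qed.

Lemma dlo_le_dhi k : dlo k <= dhi k.
Proof. by rewrite /vget; case: insub => [i|]; rewrite ?ler_pM2l. Qed.

Lemma maxF_le_xhi k : Fmax k.+1 <= xhi.
Proof. by rewrite /= ge_min lexx. Qed.

Lemma xlo_le_minF k : xlo <= Fmin k.+1.
Proof. by rewrite /= le_max lexx. Qed.

Lemma maxFS_le k : Fmax k.+1 <= Fmax k - dlo k.
Proof. by rewrite /= ge_min lexx orbT. Qed.

Lemma minFS_ge k : Fmin k - dhi k <= Fmin k.+1.
Proof. by rewrite /= le_max lexx orbT. Qed.

Lemma minF_le_maxF [k] : (k <= N)%N -> Fmin k <= Fmax k.
Proof. by case: k => [|k] le_kN; [exact: lexx | apply: feasible]. Qed.

Lemma maxGN : Gmax N = Fmax N.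
Proof. by rewrite /maxG subnn. Qed.

Lemma minGN : Gmin N = Fmin N.
Proof. by rewrite /minG subnn. Qed.

Lemma maxGS [k] : (k < N)%N -> Gmax k = Num.min (Gmax k.+1 + dhi k) (Fmax k).
Proof. by move=> lt_kN; rewrite /maxG -(subnSK lt_kN) /= subnSK // subKn // ltnW. Qed.

Lemma minGS [k] : (k < N)%N -> Gmin k = Num.max (Gmin k.+1 + dlo k) (Fmin k).
Proof. by move=> lt_kN; rewrite /minG -(subnSK lt_kN) /= subnSK // subKn // ltnW. Qed.

Lemma maxG_le_maxF [k] : (k <= N)%N -> Gmax k <= Fmax k.
Proof.
rewrite leq_eqVlt => /orP[/eqP-> | lt_kN]; first by rewrite maxGN.
by rewrite maxGS // ge_min lexx orbT.
Qed.

Lemma minF_le_minG [k] : (k <= N)%N -> Fmin k <= Gmin k.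
Proof.
rewrite leq_eqVlt => /orP[/eqP-> | lt_kN]; first by rewrite minGN.
by rewrite minGS // le_max lexx orbT.
Qed.

Lemma maxG_step [k] : (k < N)%N -> dlo k <= Gmax k - Gmax k.+1 <= dhi k.
Proof.
move=> lt_kN; have := maxG_le_maxF lt_kN; have := maxFS_le k.
have := dlo_le_dhi k; move=> *; rewrite (maxGS lt_kN) lerBrDr lerBlDr le_min ge_min.
by apply/andP; split; [apply/andP; split | apply/orP; left]; lra.
Qed.

Lemma minG_step [k] : (k < N)%N -> dlo k <= Gmin k - Gmin k.+1 <= dhi k.
Proof.
move=> lt_kN; have := minF_le_minG lt_kN; have := minFS_ge k.
have := dlo_le_dhi k; move=> *; rewrite (minGS lt_kN) lerBrDr lerBlDr le_max ge_max.
by apply/andP; split; [apply/orP; left | apply/andP; split]; lra.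
Qed.

Lemma minG_le_maxG [k] : (k <= N)%N -> Gmin k <= Gmax k.
Proof.
move: k; apply: leq_down_ind => [|j lt_jN IH].
  by rewrite minGN maxGN minF_le_maxF.
have := maxG_le_maxF lt_jN; have := minF_le_minG lt_jN; have := maxFS_le j.
have := minFS_ge j; have := dlo_le_dhi j; have := minF_le_maxF (ltnW lt_jN).
move=> *; rewrite (maxGS lt_jN) (minGS lt_jN) ge_max !le_min.
by rewrite -!andbA; apply/and4P; split; lra.
Qed.

Lemma xinit0 : xi 0 = x0.
Proof.
rewrite /xinit; have := maxG_le_maxF (leq0n N); have := minF_le_minG (leq0n N).
have := minG_le_maxG (leq0n N); rewrite /= => *; lra.
Qed.

Lemma xinit_step [k] : (k < N)%N -> dlo k <= xi k - xi k.+1 <= dhi k.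
Proof.
move=> lt_kN; have /andP[? ?] := maxG_step lt_kN.
have /andP[? ?] := minG_step lt_kN; rewrite /xinit.
by apply/andP; split; lra.
Qed.

Lemma u0_bounds (i : 'I_N) : ulo i 0 <= uinit i 0 <= uhi i 0.
Proof.
have := xinit_step (ltn_ord i); rewrite !vget_ord mxE /uinit_k.
by rewrite ler_pdivlMr // ler_pdivrMr // ![_ * delta]mulrC.
Qed.

Lemma Psi_u0 (i : 'I_N) : (Psi N delta *m uinit) i 0 = x0 - xi i.+1.
Proof.
by rewrite -[X in _ = X - _]xinit0; apply: (Psi_mul_col_diff _ xi); rewrite gt_eqF.
Qed.

Lemma s0_top (i : 'I_N) : sinit (lshift N i) 0 = xhi - xi i.+1.
Proof.
rewrite /s0 /Amat /bvec mul_col_mx opp_col_mx add_col_mx col_mxEu.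
by rewrite mxE Psi_u0 !mxE; lra.
Qed.

Lemma s0_bot (i : 'I_N) : sinit (rshift N i) 0 = xi i.+1 - xlo.
Proof.
rewrite /s0 /Amat /bvec mul_col_mx mulNmx opp_col_mx add_col_mx col_mxEd.
by rewrite mxE mxE Psi_u0 !mxE; lra.
Qed.

Lemma s0_gt0P :
  (forall i, 0 < sinit i 0) <-> (forall k, (0 < k <= N)%N -> xlo < xi k < xhi).
Proof.
split=> [s_gt0 k /andP[k_gt0 le_kN] | xi_in i].
  have lt_k1N : (k.-1 < N)%N by rewrite (leq_trans _ le_kN) // ltn_predL.
  have := s_gt0 (lshift N (Ordinal lt_k1N)); have := s_gt0 (rshift N (Ordinal lt_k1N)).
  by rewrite s0_top s0_bot /= prednK // !subr_gt0 => -> ->.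
rewrite -(splitK i); case: (split i) => j /=; have /andP[? ?] := xi_in j.+1 (ltn_ord j).
  by rewrite s0_top subr_gt0.
by rewrite s0_bot subr_gt0.
Qed.

(* When [maxG k] is not [maxF k], it is cut by [maxG k.+1 + delta * uhi_k];
   if moreover [maxG k.+1 = maxF k.+1], then [maxF k.+1] must be [xhi] (otherwise
   the cut would exceed [maxF k]), and [minF k.+1 < xhi] makes the bound strict. *)
Lemma minF_lt_maxG_or_eq (minF_lt_xhi : forall k, (0 < k <= N)%N -> Fmin k < xhi) [k] :
  (k <= N)%N -> Fmin k < Gmax k \/ Gmax k = Fmax k.
Proof.
move: k; apply: leq_down_ind => [|j lt_jN IH]; first by right; exact: maxGN.
rewrite (maxGS lt_jN).
have [_ | lt_a_F] := leP (Fmax j) (Gmax j.+1 + dhi j); [by right | left].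
have := minFS_ge j; have := dlo_le_dhi j; move=> *.
case: IH => [? | maxGSj]; first lra.
rewrite maxGSj in lt_a_F *; have := minF_lt_xhi j.+1 lt_jN.
move: lt_a_F; rewrite [Fmax j.+1]/=.
by case: (leP xhi (Fmax j - dlo j)) => *; lra.
Qed.

Lemma minG_lt_maxF_or_eq (xlo_lt_maxF : forall k, (0 < k <= N)%N -> xlo < Fmax k) [k] :
  (k <= N)%N -> Gmin k < Fmax k \/ Gmin k = Fmin k.
Proof.
move: k; apply: leq_down_ind => [|j lt_jN IH]; first by right; exact: minGN.
rewrite (minGS lt_jN).
have [_ | lt_F_b] := leP (Gmin j.+1 + dlo j) (Fmin j); [by right | left].
have := maxFS_le j; have := dlo_le_dhi j; move=> *.
case: IH => [? | minGSj]; first lra.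
rewrite minGSj in lt_F_b *; have := xlo_lt_maxF j.+1 lt_jN.
move: lt_F_b; rewrite [Fmin j.+1]/=.
by case: (leP xlo (Fmin j - dhi j)) => *; lra.
Qed.

Lemma xinit_interior
    (reach : forall k, (0 < k <= N)%N -> xlo < Fmax k /\ Fmin k < xhi) [k] :
  (0 < k <= N)%N -> xlo < xi k < xhi.
Proof.
move=> k_range; have /andP[k_gt0 le_kN] := k_range; rewrite /xinit.
have [xlo_lt_maxF minF_lt_xhi] := reach k k_range.
have : xlo <= Fmin k by rewrite -(prednK k_gt0) xlo_le_minF.
have : Fmax k <= xhi by rewrite -(prednK k_gt0) maxF_le_xhi.
have := minF_le_minG le_kN; have := maxG_le_maxF le_kN; have := minG_le_maxG le_kN.
have [? | ->] := minF_lt_maxG_or_eq (fun j hj => (reach j hj).2) le_kN;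
have [? | ->] := minG_lt_maxF_or_eq (fun j hj => (reach j hj).1) le_kN;
by move=> *; apply/andP; split; lra.
Qed.

Lemma reachable_of_xinit_interior k :
  (k <= N)%N -> xlo < xi k < xhi -> xlo < Fmax k /\ Fmin k < xhi.
Proof.
move=> le_kN; rewrite /xinit => /andP[? ?].
have := minF_le_minG le_kN; have := maxG_le_maxF le_kN; have := minG_le_maxG le_kN.
by move=> *; split; lra.
Qed.

Lemma S0_theta0 (mu : R) :
  (forall i, 0 < sinit i 0) ->
  S0 delta xlo xhi x0 ulo uhi *m theta0 delta xlo xhi x0 ulo uhi mu = mu^-1 *: const_mx 1.
Proof.
move=> s_gt0; rewrite /theta0 scalemxAr mulmxA mulmxV ?mul1mx //.
by apply: diag_mx_unitmx => i; rewrite mxE gt_eqF.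
Qed.

Lemma theta0_gt0 (mu : R) :
  0 < mu -> (forall i, 0 < sinit i 0) ->
  forall i, 0 < theta0 delta xlo xhi x0 ulo uhi mu i 0.
Proof.
move=> mu_gt0 s_gt0 i.
have := congr1 (fun M : 'cV[R]_(N + N) => M i 0) (S0_theta0 mu s_gt0).
rewrite /S0 mul_diag_mx [LHS]mxE [RHS]mxE [sinit^T _ _]mxE [const_mx 1 _ _]mxE mulr1 => E.
by rewrite -(pmulr_rgt0 _ (s_gt0 i)) E invr_gt0.
Qed.

End InitialPoint.

Theorem proposition1 (R : realFieldType) (N : nat) (delta mu xlo xhi x0 : R)
    (ulo uhi : 'cV[R]_N) :
  (1 <= N)%N -> 0 < delta -> 0 < mu -> xlo <= xhi ->
  (forall i : 'I_N, ulo i 0 <= uhi i 0) ->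
  (forall k : nat, (1 <= k <= N)%N ->
     minF delta xlo x0 uhi k <= maxF delta xhi x0 ulo k) ->
  let u := u0 delta xlo xhi x0 ulo uhi in
  let s := s0 delta xlo xhi x0 ulo uhi in
  let th := theta0 delta xlo xhi x0 ulo uhi mu in
  let A := Amat N delta in
  let b := bvec N xlo xhi x0 in
  (((S0 delta xlo xhi x0 ulo uhi *m th = mu^-1 *: const_mx 1) /\
   [/\ A *m u - b - s = 0,
       (forall i : 'I_N, 0 <= u i 0 - ulo i 0),
       (forall i : 'I_N, 0 <= uhi i 0 - u i 0),
       (forall i : 'I_(N + N), 0 < s i 0) &
       (forall i : 'I_(N + N), 0 <= th i 0)]))
   <->
   (forall k : nat, (1 <= k <= N)%N ->
      xlo < maxF delta xhi x0 ulo k /\ minF delta xlo x0 uhi k < xhi).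
Proof.
move=> _ delta_gt0 mu_gt0 _ ulo_le_uhi feasible u s th A b.
have s_gt0P := s0_gt0P delta_gt0 ulo_le_uhi feasible.
split=> [[_ [_ _ _ s_gt0 _]] k k_range | reach].
  apply: (reachable_of_xinit_interior delta_gt0 ulo_le_uhi feasible).
    by case/andP: k_range.
  exact: s_gt0P.1 s_gt0 k k_range.
have s_gt0 := s_gt0P.2 (xinit_interior delta_gt0 ulo_le_uhi feasible reach).
split; first exact: S0_theta0.
split=> [|i|i|//|i]; first exact: subrr.
- by rewrite subr_ge0; exact: (andP (u0_bounds delta_gt0 ulo_le_uhi i)).1.
- by rewrite subr_ge0; exact: (andP (u0_bounds delta_gt0 ulo_le_uhi i)).2.
- exact/ltW/theta0_gt0.
Qed.
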